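(* Let $n\ge1$, and let $H_{2n}$ be the $(4n+1)$-dimensional Heisenberg group. Let $N=H_{2n}\times\mathbb R^3$, let $\Gamma$ be a cocompact lattice in $H_{2n}$, and let $\mathbb Z^3\subset\mathbb R^3$ be a lattice. Then the compact nilmanifold $N/(\Gamma\times\mathbb Z^3)$ admits an invariant HPKT structure.
   Context: The Heisenberg Lie algebra $\mathfrak h_{2n}$ has basis $X_1,\dots,X_{2n},Y_1,\dots,Y_{2n},Z$ with nonzero brackets $[X_j,Y_j]=Z$. $H_{2n}$ is the corresponding simply connected Lie group. An almost hyper-paracomplex structure on a manifold is a triple $(J_1,J_2,J_3)$ of endomorphisms of the tangent bundle with $J_1^2=J_2^2=\mathrm{id}$, $J_3^2=-\mathrm{id}$ and $J_1J_2=-J_2J_1=J_3$. It is hyper-paracomplex if each $J_a$ has vanishing Nijenhuis tensor. A metric $g$ is hyperparahermitian if $g(J_1X,J_1Y)=g(J_2X,J_2Y)=-g(J_3X,J_3Y)=-g(X,Y)$. An HPKT structure is a hyper-paracomplex structure together with a hyperparahermitian metric admitting a linear connection $\nabla$ with $\nabla g=\nabla J_a=0$ and totally skew-symmetric torsion. ''Invariant'' on a quotient of a Lie group by a discrete subgroup (acting by left translations) means induced by left-invariant structures. *)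

(* Left-invariant geometric structures on the Lie group
   N = H_{2n} x R^3 are encoded on its Lie algebra n = h_{2n} (+) R^3,
   realised as row vectors 'rV[R]_(dim n) in the basis
   X_1..X_2n, Y_1..Y_2n, Z, E_1, E_2, E_3. *)
From HB Require Import structures.
From mathcomp Require Import all_boot all_order all_algebra.
From mathcomp Require Import reals.
Set Implicit Arguments. Unset Strict Implicit. Unset Printing Implicit Defensive.
Import Order.TTheory GRing.Theory Num.Theory.
Local Open Scope ring_scope.

Section HPKT.
Variable R : realType.

(* dimension of h_{2n} (+) R^3 : (4n+1) + 3 *)
Definition ldim (n : nat) : nat := (4 * n + 3).+1.

Definition vec (n : nat) := 'rV[R]_(ldim n).

Definition Xi (n j : nat) : 'I_(ldim n) := inord j.             (* X_{j+1}, j < 2n *)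
Definition Yi (n j : nat) : 'I_(ldim n) := inord (2 * n + j).   (* Y_{j+1}, j < 2n *)
Definition Zi (n : nat) : 'I_(ldim n) := inord (4 * n).
Definition Ei (n k : nat) : 'I_(ldim n) := inord (4 * n + 1 + k). (* R^3 basis, k < 3 *)

(* Lie bracket of h_{2n} (+) R^3 : only nonzero brackets [X_j, Y_j] = Z *)
Definition bracket (n : nat) (u v : vec n) : vec n :=
  (\sum_(j < 2 * n)
      (u 0 (Xi n j) * v 0 (Yi n j) - u 0 (Yi n j) * v 0 (Xi n j)))
    *: delta_mx 0 (Zi n).

Definition act (n : nat) (J : 'M[R]_(ldim n)) (u : vec n) : vec n := u *m J.

Definition nijenhuis (n : nat) (J : 'M[R]_(ldim n)) (x y : vec n) : vec n :=
  bracket (act J x) (act J y) - act J (bracket (act J x) y)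
  - act J (bracket x (act J y)) + act J (act J (bracket x y)).

Definition hyper_paracomplex (n : nat) (J1 J2 J3 : 'M[R]_(ldim n)) : Prop :=
  [/\ [/\ forall u, act J1 (act J1 u) = u,
          forall u, act J2 (act J2 u) = u &
          forall u, act J3 (act J3 u) = - u],
      [/\ forall u, act J1 (act J2 u) = act J3 u &
          forall u, act J2 (act J1 u) = - act J3 u] &
      [/\ forall x y, nijenhuis J1 x y = 0,
          forall x y, nijenhuis J2 x y = 0 &
          forall x y, nijenhuis J3 x y = 0]].

Definition form (n : nat) (G : 'M[R]_(ldim n)) (u v : vec n) : R :=
  (u *m G *m v^T) 0 0.

(* G is a (pseudo-Riemannian) metric: symmetric and nondegenerate *)
Definition metric (n : nat) (G : 'M[R]_(ldim n)) : Prop :=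
  G^T = G /\ G \in unitmx.

Definition hyperparahermitian (n : nat) (J1 J2 J3 G : 'M[R]_(ldim n)) : Prop :=
  [/\ metric G,
      forall x y, form G (act J1 x) (act J1 y) = - form G x y,
      forall x y, form G (act J2 x) (act J2 y) = - form G x y &
      forall x y, - form G (act J3 x) (act J3 y) = - form G x y].

(* a left-invariant linear connection is a bilinear map on the Lie algebra;
   it is given by connection matrices Gam i (one per basis vector):
   nabla_u v = sum_i u_i (v *m Gam i) *)
Definition nabla (n : nat) (Gam : 'I_(ldim n) -> 'M[R]_(ldim n)) (u v : vec n)
  : vec n := \sum_i u 0 i *: (v *m Gam i).

Definition torsion (n : nat) (Gam : 'I_(ldim n) -> 'M[R]_(ldim n)) (x y : vec n)
  : vec n := nabla Gam x y - nabla Gam y x - bracket x y.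

(* HPKT structure on the Lie algebra (i.e. a left-invariant HPKT structure) *)
Definition HPKT (n : nat) (J1 J2 J3 G : 'M[R]_(ldim n)) : Prop :=
  [/\ hyper_paracomplex J1 J2 J3,
      hyperparahermitian J1 J2 J3 G &
      exists Gam : 'I_(ldim n) -> 'M[R]_(ldim n),
        [/\ (* nabla g = 0 *)
            forall x y z, form G (nabla Gam x y) z + form G y (nabla Gam x z) = 0,
            (* nabla J_a = 0 *)
            forall x y, nabla Gam x (act J1 y) = act J1 (nabla Gam x y),
            forall x y, nabla Gam x (act J2 y) = act J2 (nabla Gam x y),
            forall x y, nabla Gam x (act J3 y) = act J3 (nabla Gam x y) &
            (* totally skew-symmetric torsion *)
            forall x y z,
              form G (torsion Gam x y) z = - form G (torsion Gam y x) z /\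
              form G (torsion Gam x y) z = - form G (torsion Gam x z) y]].

End HPKT.

(* Everything is left-invariant, so we work on the Lie algebra h_{2n} (+) R^3,
   whose bracket is [x, y] = w(x, y) Z with w the standard symplectic form on
   span{X_j, Y_j}.  Let J1 be +1 on X_j, Z, E_2 and -1 on Y_j, E_1, E_3, let
   J2 swap X_j <-> Y_j, Z <-> E_1, E_2 <-> E_3, and J3 = J1 J2.  These are
   w-skew, i.e. [Jx, y] = -[x, Jy], and J^2 = +-1, so their Nijenhuis tensors
   vanish.  The neutral metric g pairing X_j with Y_{n+j}, X_{n+j}
   with -Y_j, Z with E_3 and E_1 with -E_2 is hyperparahermitian and
   satisfies g(Z, .) = E^3.  The endomorphism Omega = g^-1 w commutes with the
   J_a, so nabla_x = - E^3(x) Omega is metric and hyper-paracomplex, and its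
   torsion 3-form is - E^3 /\ w, which is totally skew. *)

From HB Require Import structures.
From mathcomp Require Import all_boot all_order all_algebra.
From mathcomp Require Import reals.
From mathcomp Require Import zify ring.
(* Imported last, so that [Defs.form] shadows [sesquilinear.form]. *)
From Pilot Require Import Defs.
Set Implicit Arguments. Unset Strict Implicit. Unset Printing Implicit Defensive.
Import GRing.Theory.
Local Open Scope ring_scope.

Section SignedPermutationMatrices.
Variables (R : pzRingType) (N : nat).
Implicit Types (p q : 'I_N -> 'I_N) (s t : 'I_N -> R).

Definition spm p s : 'M[R]_N := \matrix_(i, k) ((i == p k)%:R * s k).

Lemma row_mul_spm (u : 'rV[R]_N) p s k : (u *m spm p s) 0 k = u 0 (p k) * s k.
Proof.
rewrite mxE (bigD1 (p k)) //= mxE eqxx mul1r big1 ?addr0 // => i /negbTE ne.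
by rewrite mxE ne mul0r mulr0.
Qed.

Lemma mul_spm p s q t :
  spm p s *m spm q t = spm (p \o q) (fun k => s (q k) * t k).
Proof.
apply/matrixP => i k; rewrite !mxE (bigD1 (q k)) //= !mxE eqxx big1 ?addr0.
  by rewrite mul1r mulrA.
by move=> l /negbTE ne; rewrite !mxE ne mul0r mulr0.
Qed.

Lemma eq_spm p q s t : p =1 q -> s =1 t -> spm p s = spm q t.
Proof. by move=> epq est; apply/matrixP => i k; rewrite !mxE epq est. Qed.

Lemma oppmx_spm p s : - spm p s = spm p (fun k => - s k).
Proof. by apply/matrixP => i k; rewrite !mxE mulrN. Qed.

Lemma tr_spm p s : involutive p -> (spm p s)^T = spm p (s \o p).
Proof.
move=> pK; apply/matrixP => i k; rewrite !mxE /=.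
have [->|ne] := eqVneq k (p i); first by rewrite pK eqxx.
by rewrite -[i in i == _]pK (inj_eq (inv_inj pK)) eq_sym (negbTE ne) !mul0r.
Qed.

Lemma spm_invol p s : involutive p -> (forall k, s (p k) * s k = 1) ->
  spm p s *m spm p s = 1%:M.
Proof.
move=> pK ss; rewrite mul_spm; apply/matrixP => i k.
by rewrite !mxE /= pK ss mulr1.
Qed.

End SignedPermutationMatrices.

Section BilinearForms.
Variables (R : realType) (n : nat).
Local Notation N := (ldim n).
Implicit Types (u v x y z : vec R n) (G J : 'M[R]_N).

Lemma formDl G x y z : form G (x + y) z = form G x z + form G y z.
Proof. by rewrite /form !mulmxDl mxE. Qed.

Lemma formNl G x z : form G (- x) z = - form G x z.
Proof. by rewrite /form !mulNmx mxE. Qed.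

Lemma formZl G a x z : form G (a *: x) z = a * form G x z.
Proof. by rewrite /form -!scalemxAl mxE. Qed.

Lemma form_oppmx G x y : form (- G) x y = - form G x y.
Proof. by rewrite /form mulmxN mulNmx mxE. Qed.

Lemma form_act G J x y : form G (act J x) (act J y) = form (J *m G *m J^T) x y.
Proof. by rewrite /form /act trmx_mul !mulmxA. Qed.

Lemma form_sym G : G^T = G -> forall x y, form G x y = form G y x.
Proof.
have tr00 (A : 'M[R]_1) : A 0 0 = A^T 0 0 by rewrite mxE.
by move=> sG x y; rewrite /form [LHS]tr00 !trmx_mul trmxK sG mulmxA.
Qed.

Lemma form_delta i j x y : form (delta_mx i j) x y = x 0 i * y 0 j.
Proof.
rewrite /form -(mul_delta_mx (0 : 'I_1)) mulmxA -colE -mulmxA -rowE.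
by rewrite mxE big_ord1 !mxE.
Qed.

Lemma form_delta_mxl G i e y :
  delta_mx 0 i *m G = delta_mx 0 e :> vec R n -> form G (delta_mx 0 i) y = y 0 e.
Proof. by move=> rowG; rewrite /form rowG -rowE !mxE. Qed.

End BilinearForms.

Section HPKTCriterion.
Variables (R : realType) (n : nat).
Local Notation N := (ldim n).
Implicit Types (u v x y z : vec R n) (G J : 'M[R]_N).

Definition omega u v : R := \sum_(j < 2 * n)
  (u 0 (Xi n j) * v 0 (Yi n j) - u 0 (Yi n j) * v 0 (Xi n j)).

Lemma bracketE u v : bracket u v = omega u v *: delta_mx 0 (Zi n).
Proof. by []. Qed.

Lemma omega_antisym u v : omega u v = - omega v u.
Proof. by rewrite /omega -sumrN; apply: eq_bigr => j _; ring. Qed.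

Lemma omegaZr u a v : omega u (a *: v) = a * omega u v.
Proof. by rewrite /omega mulr_sumr; apply: eq_bigr => j _; rewrite !mxE; ring. Qed.

Lemma omegaNr u v : omega u (- v) = - omega u v.
Proof. by rewrite -scaleN1r omegaZr mulN1r. Qed.

Definition omega_mx : 'M[R]_N := \sum_(j < 2 * n)
  (delta_mx (Xi n j) (Yi n j) - delta_mx (Yi n j) (Xi n j)).

Lemma omega_form u v : omega u v = form omega_mx u v.
Proof.
rewrite /form mulmx_sumr mulmx_suml summxE; apply: eq_bigr => j _.
by rewrite -!form_delta /form mulmxBr mulmxBl !mxE.
Qed.

Definition bracket_skew J := forall u v, omega (u *m J) v = - omega u (v *m J).

Lemma nijenhuis_eq0 J (eps : R) : bracket_skew J -> J *m J = eps%:M ->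
  forall x y, nijenhuis J x y = 0.
Proof.
move=> skJ JJ x y; have JJu u : u *m J *m J = eps *: u.
  by rewrite -mulmxA JJ mul_mx_scalar.
rewrite /nijenhuis /act !bracketE skJ JJu omegaZr skJ -!scalemxAl JJu scalerA.
by rewrite !scaleNr opprK addrK mulrC addNr.
Qed.

Section Anticommuting.
Variables J1 J2 : 'M[R]_N.
Hypotheses (J1_invol : J1 *m J1 = 1%:M) (J2_invol : J2 *m J2 = 1%:M).
Hypothesis J1J2_anti : J1 *m J2 = - (J2 *m J1).

Lemma anticomm_mul_sqr : J2 *m J1 *m (J2 *m J1) = (-1)%:M.
Proof.
rewrite mulmxA -(mulmxA J2) J1J2_anti mulmxN mulNmx !mulmxA J2_invol mul1mx.
by rewrite J1_invol raddfN.
Qed.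

Lemma bracket_skew_anticomm_mul : bracket_skew J1 -> bracket_skew J2 -> bracket_skew (J2 *m J1).
Proof.
move=> sk1 sk2 u v; rewrite mulmxA sk1 sk2 opprK !mulmxA -(mulmxA v) J1J2_anti.
by rewrite mulmxN omegaNr mulmxA.
Qed.

Lemma hyper_paracomplex_anticomm : bracket_skew J1 -> bracket_skew J2 ->
  hyper_paracomplex J1 J2 (J2 *m J1).
Proof.
move=> sk1 sk2; split; split.
- by move=> u; rewrite /act -mulmxA J1_invol mulmx1.
- by move=> u; rewrite /act -mulmxA J2_invol mulmx1.
- by move=> u; rewrite /act -mulmxA anticomm_mul_sqr mul_mx_scalar scaleN1r.
- by move=> u; rewrite /act mulmxA.
- by move=> u; rewrite /act -mulmxA J1J2_anti mulmxN mulmxA.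
- exact: (nijenhuis_eq0 (eps := 1)).
- exact: (nijenhuis_eq0 (eps := 1)).
- exact: (nijenhuis_eq0 (bracket_skew_anticomm_mul sk1 sk2) anticomm_mul_sqr).
Qed.

Lemma hyperparahermitian_anticomm G : metric G ->
    J1 *m G *m J1^T = - G -> J2 *m G *m J2^T = - G ->
  hyperparahermitian J1 J2 (J2 *m J1) G.
Proof.
move=> mG iso1 iso2; split=> // x y; rewrite form_act.
- by rewrite iso1 form_oppmx.
- by rewrite iso2 form_oppmx.
have -> : J2 *m J1 *m G *m (J2 *m J1)^T = J2 *m (J1 *m G *m J1^T) *m J2^T.
  by rewrite trmx_mul !mulmxA.
by rewrite iso1 mulmxN mulNmx iso2 opprK.
Qed.

End Anticommuting.

Section Connection.
Variables (G : 'M[R]_N) (e : 'I_N).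
Hypothesis G_metric : metric G.

Definition Omega : 'M[R]_N := omega_mx *m invmx G.

Lemma form_Omega u v : form G (u *m Omega) v = omega u v.
Proof. by case: G_metric => _ Gu; rewrite omega_form /form mulmxA mulmxKV. Qed.

Lemma form_nondeg a b : (forall v, form G a v = form G b v) -> a = b.
Proof.
case: G_metric => _ Gu eq_ab.
suff: a *m G = b *m G by move/(congr1 (mulmx^~ (invmx G))); rewrite !mulmxK.
by apply/rowP => k; have := eq_ab (delta_mx 0 k); rewrite /form trmx_delta -!colE !mxE.
Qed.

Lemma Omega_commute J : J *m J = 1%:M -> bracket_skew J -> J *m G *m J^T = - G ->
  forall u, u *m J *m Omega = u *m Omega *m J.
Proof.
move=> JJ skJ iso u; apply: form_nondeg => v.
have vJJ : v = v *m J *m J by rewrite -mulmxA JJ mulmx1.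
by rewrite form_Omega [in RHS]vJJ form_act iso form_oppmx form_Omega skJ.
Qed.

Definition Gamma (i : 'I_N) : 'M[R]_N := if i == e then - Omega else 0.

Lemma nabla_Gamma x y : nabla Gamma x y = - (x 0 e *: (y *m Omega)).
Proof.
rewrite /nabla (bigD1 e) //= big1 ?addr0 => [|i /negbTE ne].
  by rewrite /Gamma eqxx mulmxN scalerN.
by rewrite /Gamma ne mulmx0 scaler0.
Qed.

Lemma nabla_Gamma_metric x y z :
  form G (nabla Gamma x y) z + form G y (nabla Gamma x z) = 0.
Proof.
case: G_metric => sG _; rewrite !nabla_Gamma [form G y _]form_sym //.
by rewrite !formNl !formZl !form_Omega [omega z y]omega_antisym; ring.
Qed.

Lemma nabla_Gamma_act J : (forall u, u *m J *m Omega = u *m Omega *m J) ->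
  forall x y, nabla Gamma x (act J y) = act J (nabla Gamma x y).
Proof. by move=> cJ x y; rewrite /act !nabla_Gamma cJ mulNmx scalemxAl. Qed.

Hypothesis G_Z : delta_mx 0 (Zi n) *m G = delta_mx 0 e :> vec R n.

Lemma form_torsion x y z : form G (torsion Gamma x y) z =
  - (x 0 e * omega y z) + y 0 e * omega x z - omega x y * z 0 e.
Proof.
rewrite /torsion !nabla_Gamma bracketE !(formDl, formNl, formZl) !form_Omega.
by rewrite (form_delta_mxl _ G_Z); ring.
Qed.

End Connection.

Theorem HPKT_criterion (J1 J2 G : 'M[R]_N) (e : 'I_N) :
    J1 *m J1 = 1%:M -> J2 *m J2 = 1%:M -> J1 *m J2 = - (J2 *m J1) ->
    bracket_skew J1 -> bracket_skew J2 ->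
    metric G -> J1 *m G *m J1^T = - G -> J2 *m G *m J2^T = - G ->
    delta_mx 0 (Zi n) *m G = delta_mx 0 e :> vec R n ->
  HPKT J1 J2 (J2 *m J1) G.
Proof.
move=> J11 J22 J12 sk1 sk2 mG iso1 iso2 GZ.
have c1 := Omega_commute mG J11 sk1 iso1; have c2 := Omega_commute mG J22 sk2 iso2.
split; [exact: hyper_paracomplex_anticomm | exact: hyperparahermitian_anticomm |].
exists (Gamma G e); split.
- exact: nabla_Gamma_metric.
- exact: nabla_Gamma_act.
- exact: nabla_Gamma_act.
- by apply: nabla_Gamma_act => u; rewrite mulmxA c1 c2 -mulmxA.
- move=> x y z; rewrite !form_torsion //.
  by rewrite [omega y x]omega_antisym [omega z y]omega_antisym; split; ring.
Qed.

End HPKTCriterion.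

Ltac split_innermost_ifs :=
  let innermost c := lazymatch c with context [if _ then _ else _] => fail | _ => idtac end in
  repeat match goal with |- context [if ?c then _ else _] => innermost c; destruct c eqn:? end.

Section Construction.
Variables (R : realType) (n : nat).
Local Notation N := (ldim n).

Definition swapXY_nat (k : nat) : nat :=
  (if k < 2 * n then k + 2 * n else if k < 4 * n then k - 2 * n
   else if k == 4 * n then 4 * n + 1 else if k == 4 * n + 1 then 4 * n
   else if k == 4 * n + 2 then 4 * n + 3 else 4 * n + 2)%N.

Definition partner_nat (k : nat) : nat :=
  (if k < n then k + 3 * n else if k < 2 * n then k + n
   else if k < 3 * n then k - n else if k < 4 * n then k - 3 * n
   else if k == 4 * n then 4 * n + 3 else if k == 4 * n + 1 then 4 * n + 2
   else if k == 4 * n + 2 then 4 * n + 1 else 4 * n)%N.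

Definition swapXY (i : 'I_N) : 'I_N := inord (swapXY_nat i).
Definition partner (i : 'I_N) : 'I_N := inord (partner_nat i).

Definition Jdiag_neg (i : 'I_N) : bool :=
  [|| 2 * n <= i < 4 * n, i == 4 * n + 1 :> nat | i == 4 * n + 3 :> nat]%N.
Definition gneutral_neg (i : 'I_N) : bool :=
  [|| n <= i < 3 * n, i == 4 * n + 1 :> nat | i == 4 * n + 2 :> nat]%N.

Ltac index_lia :=
  unfold swapXY_nat, partner_nat, Jdiag_neg, gneutral_neg, Xi, Yi, Zi, Ei, ldim in *;
  split_innermost_ifs; lia.

Lemma swapXY_val i : swapXY i = swapXY_nat i :> nat.
Proof. by rewrite inordK //; have := ltn_ord i; index_lia. Qed.

Lemma partner_val i : partner i = partner_nat i :> nat.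
Proof. by rewrite inordK //; have := ltn_ord i; index_lia. Qed.

Ltac ordinal_lia i :=
  try apply: val_inj; rewrite /= /Jdiag_neg /gneutral_neg ?(swapXY_val, partner_val);
  have := ltn_ord i; index_lia.

Lemma swapXYK : involutive swapXY. Proof. by move=> i; ordinal_lia i. Qed.
Lemma partnerK : involutive partner. Proof. by move=> i; ordinal_lia i. Qed.
Lemma partner_swapXY i : partner (swapXY i) = swapXY (partner i).
Proof. by ordinal_lia i. Qed.

Lemma Jdiag_neg_swapXY i : Jdiag_neg (swapXY i) = ~~ Jdiag_neg i. Proof. by ordinal_lia i. Qed.
Lemma Jdiag_neg_partner i : Jdiag_neg (partner i) = ~~ Jdiag_neg i. Proof. by ordinal_lia i. Qed.
Lemma gneutral_neg_swapXY i : gneutral_neg (swapXY i) = ~~ gneutral_neg i. Proof. by ordinal_lia i. Qed.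
Lemma gneutral_neg_partner i : gneutral_neg (partner i) = gneutral_neg i. Proof. by ordinal_lia i. Qed.

Section SymplecticBasis.
Variable j : nat.
Hypothesis lt_j_2n : (j < 2 * n)%N.

Lemma swapXY_X : swapXY (Xi n j) = Yi n j.
Proof. by apply: val_inj; rewrite /= swapXY_val /Xi /Yi !inordK; index_lia. Qed.

Lemma swapXY_Y : swapXY (Yi n j) = Xi n j.
Proof. by apply: val_inj; rewrite /= swapXY_val /Xi /Yi !inordK; index_lia. Qed.

Lemma Jdiag_neg_X : Jdiag_neg (Xi n j) = false.
Proof. by rewrite /Jdiag_neg /Xi inordK; index_lia. Qed.

Lemma Jdiag_neg_Y : Jdiag_neg (Yi n j) = true.
Proof. by rewrite /Jdiag_neg /Yi inordK; index_lia. Qed.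

End SymplecticBasis.

Lemma partner_E3 : partner (Ei n 2) = Zi n.
Proof. by apply: val_inj; rewrite /= partner_val /Zi /Ei !inordK; index_lia. Qed.

Lemma gneutral_neg_E3 : gneutral_neg (Ei n 2) = false.
Proof. by rewrite /gneutral_neg /Ei inordK; index_lia. Qed.

Definition Jdiag : 'M[R]_N := spm id (fun k => (-1) ^+ Jdiag_neg k).
Definition Jswap : 'M[R]_N := spm swapXY (fun=> 1).
Definition gneutral : 'M[R]_N := spm partner (fun k => (-1) ^+ gneutral_neg k).

Lemma Jdiag_invol : Jdiag *m Jdiag = 1%:M.
Proof. by apply: spm_invol => // k; rewrite -expr2 sqrr_sign. Qed.

Lemma Jswap_invol : Jswap *m Jswap = 1%:M.
Proof. by apply: spm_invol => [|k]; [exact: swapXYK | rewrite mulr1]. Qed.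

Lemma Jdiag_Jswap_anti : Jdiag *m Jswap = - (Jswap *m Jdiag).
Proof.
rewrite !mul_spm oppmx_spm; apply: eq_spm => k //=.
by rewrite Jdiag_neg_swapXY signrN mulr1 mul1r.
Qed.

Lemma bracket_skew_Jdiag : bracket_skew Jdiag.
Proof.
move=> u v; rewrite /omega -sumrN; apply: eq_bigr => j _; have lt_j := ltn_ord j.
by rewrite !row_mul_spm Jdiag_neg_X ?Jdiag_neg_Y // expr0 expr1; ring.
Qed.

Lemma bracket_skew_Jswap : bracket_skew Jswap.
Proof.
move=> u v; rewrite /omega -sumrN; apply: eq_bigr => j _; have lt_j := ltn_ord j.
by rewrite !row_mul_spm swapXY_X ?swapXY_Y //; ring.
Qed.

Lemma gneutral_metric : metric gneutral.
Proof.
have GG : gneutral *m gneutral = 1%:M.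
  apply: spm_invol => [|k]; first exact: partnerK.
  by rewrite gneutral_neg_partner -expr2 sqrr_sign.
split; last by case: (mulmx1_unit GG).
by rewrite tr_spm; [apply: eq_spm => k //=; rewrite gneutral_neg_partner | exact: partnerK].
Qed.

Lemma Jdiag_anti_isometry : Jdiag *m gneutral *m Jdiag^T = - gneutral.
Proof.
rewrite tr_spm // !mul_spm oppmx_spm; apply: eq_spm => k //=.
by rewrite Jdiag_neg_partner signrN !mulNr mulrAC -expr2 sqrr_sign mul1r.
Qed.

Lemma Jswap_anti_isometry : Jswap *m gneutral *m Jswap^T = - gneutral.
Proof.
rewrite tr_spm; last exact: swapXYK.
rewrite !mul_spm oppmx_spm; apply: eq_spm => k /=.
  by rewrite partner_swapXY swapXYK.
by rewrite gneutral_neg_swapXY signrN mul1r mulr1.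
Qed.

Lemma gneutral_Z : delta_mx 0 (Zi n) *m gneutral = delta_mx 0 (Ei n 2) :> vec R n.
Proof.
apply/rowP => k; rewrite row_mul_spm !mxE /= -partner_E3 (inj_eq (inv_inj partnerK)).
by case: eqP => [->|_]; rewrite ?gneutral_neg_E3 ?mulr1 ?mul0r.
Qed.

End Construction.

Theorem mainTheorem7 (R : realType) (n : nat) (hn : (1 <= n)%N) :
  exists J1 J2 J3 G : 'M[R]_(ldim n), HPKT J1 J2 J3 G.
Proof.
exists (Jdiag R n), (Jswap R n), (Jswap R n *m Jdiag R n), (gneutral R n).
apply: (HPKT_criterion (e := Ei n 2)).
- exact: Jdiag_invol.
- exact: Jswap_invol.
- exact: Jdiag_Jswap_anti.
- exact: bracket_skew_Jdiag.
- exact: bracket_skew_Jswap.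
- exact: gneutral_metric.
- exact: Jdiag_anti_isometry.
- exact: Jswap_anti_isometry.
- exact: gneutral_Z.
Qed.
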